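(* Let $\mathbb{F}$ be a field and let $n>4$ be an integer. Then for each $p\in\{0,\ldots,n-3\}$ there exists a unital $\mathbb{F}$-algebra $\mathcal{A}$ with $\dim\mathcal{A}=n$ and $l(\mathcal{A})=2^{n-3}+2^{p}$.
   Context: All algebras are finite-dimensional, unital, not necessarily associative algebras over the field $\mathbb{F}$. For a finite generating set $S$ of an algebra $\mathcal{A}$, a word in $S$ is any product (with any bracketing) of finitely many elements of $S$; its length is the number of factors, and the unit $1$ is regarded as a word of length $0$. Let $L_i(S)$ denote the linear span of all words in $S$ of length at most $i$ (so $L_0(S)=\mathbb{F}$). The length of $S$ is $l(S)=\min\{k\ge 0: L_k(S)=\mathcal{A}\}$, and the length of $\mathcal{A}$ is $l(\mathcal{A})=\max\{l(S): S \text{ a finite generating set of } \mathcal{A}\}$. *)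

From mathcomp Require Import all_boot all_algebra.
Set Implicit Arguments. Unset Strict Implicit. Unset Printing Implicit Defensive.
Import GRing.Theory.
Local Open Scope ring_scope.

(* A (not necessarily associative) algebra of dimension n over F, realised on
   the carrier F^n = 'rV[F]_n, given by structure constants sc i j = e_i e_j
   and a distinguished element [one] (the unit; unitality is a separate
   hypothesis [is_unital]). *)
Record nalg (F : fieldType) (n : nat) := NAlg {
  sc : 'I_n -> 'I_n -> 'rV[F]_n;
  one : 'rV[F]_n }.

Definition mulA (F : fieldType) n (A : nalg F n) (x y : 'rV[F]_n) : 'rV[F]_n :=
  \sum_(i < n) \sum_(j < n) (x 0 i * y 0 j) *: sc A i j.

Definition is_unital (F : fieldType) n (A : nalg F n) : Prop :=
  forall x, mulA A (one A) x = x /\ mulA A x (one A) = x.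

(* Words: fully bracketed products (binary trees) whose leaves are letters. *)
Inductive word (T : Type) := Leaf of T | Node of word T & word T.

Fixpoint leaves T (w : word T) : seq T :=
  match w with Leaf x => [:: x] | Node w1 w2 => leaves w1 ++ leaves w2 end.

Definition wlen T (w : word T) : nat := size (leaves w).

Definition word_in (F : fieldType) n (S : seq 'rV[F]_n) (w : word 'rV[F]_n) :=
  all (fun x => x \in S) (leaves w).

Fixpoint weval (F : fieldType) n (A : nalg F n) (w : word 'rV[F]_n) : 'rV[F]_n :=
  match w with Leaf x => x | Node w1 w2 => mulA A (weval A w1) (weval A w2) end.

(* v \in L_i(S): v is a linear combination of 1 (the word of length 0) and of
   words in S of length at most i. *)
Definition inL (F : fieldType) n (A : nalg F n) (S : seq 'rV[F]_n) (i : nat)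
    (v : 'rV[F]_n) : Prop :=
  exists (c : F) (ps : seq (F * word 'rV[F]_n)),
    all (fun p => word_in S p.2 && (wlen p.2 <= i)%N) ps /\
    v = c *: one A + \sum_(p <- ps) p.1 *: weval A p.2.

Definition generates (F : fieldType) n (A : nalg F n) (S : seq 'rV[F]_n) : Prop :=
  forall v, exists i, inL A S i v.

Definition set_length (F : fieldType) n (A : nalg F n) (S : seq 'rV[F]_n)
    (k : nat) : Prop :=
  (forall v, inL A S k v) /\
  (forall j, (forall v, inL A S j v) -> (k <= j)%N).

Definition alg_length (F : fieldType) n (A : nalg F n) (m : nat) : Prop :=
  (exists S, generates A S /\ set_length A S m) /\
  (forall S k, generates A S -> set_length A S k -> (k <= m)%N).

(* Take the algebra with basis 1 = e_0, e_1, ..., e_(n-1), where e_i e_i = e_(i+1)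
   for 1 <= i <= n-3, e_(n-2) e_(p+1) = e_(n-1), and all other products of
   non-unit basis vectors vanish.  Giving e_k the degree deg k = 2^(k-1)
   (k <= n-2), deg (n-1) = 2^(n-3) + 2^p makes these products additive in
   degree, so a word of length l in e_1 lies in the span of the e_k of degree l;
   hence e_(n-1) needs words of length 2^(n-3) + 2^p and l({e_1}) is that number.
   Conversely, products of vectors with zero e_1-coordinate keep it zero, so any
   generating set S contains some s with nonzero e_1-coordinate.  Repeatedly
   squaring s - s_0 1, then multiplying the (n-2)-th and (p+1)-th squares, gives
   for every k >= 1 an element of L_(deg k)(S) whose first nonzero coordinate
   is the k-th; these form a triangular basis of the augmentation ideal, so
   L_(2^(n-3) + 2^p)(S) is the whole algebra. *)

From Pilot Require Import Defs.
From mathcomp Require Import all_boot all_algebra.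
From mathcomp Require Import zify.
Set Implicit Arguments. Unset Strict Implicit. Unset Printing Implicit Defensive.
Import GRing.Theory.
Local Open Scope ring_scope.

(* MathComp also exports constants named [mulA] and [one]. *)
Local Notation mulA := Defs.mulA.
Local Notation one := Defs.one.

Section Rows.
Variables (F : fieldType) (n : nat).
Implicit Types (u v : 'rV[F]_n).

Definition ev (k : nat) : 'rV[F]_n := \row_j ((j : nat) == k)%:R.

Definition vanish_below m u := forall i : 'I_n, (i < m)%N -> u 0 i = 0.

Definition lead m u := vanish_below m u /\ forall i : 'I_n, i = m :> nat -> u 0 i != 0.

Lemma vanish_below_support m u i : vanish_below m u -> u 0 i != 0 -> (m <= i)%N.
Proof. by move=> u_m ui_nz; rewrite leqNgt; apply: contra ui_nz => /u_m ->. Qed.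

Lemma ev_delta (j : 'I_n) : ev j = delta_mx 0 j.
Proof. by apply/rowP => k; rewrite !mxE. Qed.

End Rows.

Section Multiplication.
Variables (F : fieldType) (n : nat) (A : nalg F n).
Implicit Types (u v : 'rV[F]_n).

Lemma mulA_addl u u' v : mulA A (u + u') v = mulA A u v + mulA A u' v.
Proof.
rewrite /mulA -big_split; apply: eq_bigr => i _; rewrite -big_split.
by apply: eq_bigr => j _; rewrite mxE mulrDl scalerDl.
Qed.

Lemma mulA_addr u v v' : mulA A u (v + v') = mulA A u v + mulA A u v'.
Proof.
rewrite /mulA -big_split; apply: eq_bigr => i _; rewrite -big_split.
by apply: eq_bigr => j _; rewrite mxE mulrDr scalerDl.
Qed.

Lemma mulA_scalel a u v : mulA A (a *: u) v = a *: mulA A u v.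
Proof.
rewrite /mulA scaler_sumr; apply: eq_bigr => i _; rewrite scaler_sumr.
by apply: eq_bigr => j _; rewrite mxE scalerA mulrA.
Qed.

Lemma mulA_scaler a u v : mulA A u (a *: v) = a *: mulA A u v.
Proof.
rewrite /mulA scaler_sumr; apply: eq_bigr => i _; rewrite scaler_sumr.
by apply: eq_bigr => j _; rewrite mxE scalerA mulrCA mulrA.
Qed.

Lemma mulA0l v : mulA A 0 v = 0.
Proof. by rewrite -[X in mulA A X v](scale0r (0 : 'rV[F]_n)) mulA_scalel scale0r. Qed.

Lemma mulA0r u : mulA A u 0 = 0.
Proof. by rewrite -[X in mulA A u X](scale0r (0 : 'rV[F]_n)) mulA_scaler scale0r. Qed.

Lemma mulA_suml (I : Type) (r : seq I) (f : I -> 'rV[F]_n) v :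
  mulA A (\sum_(x <- r) f x) v = \sum_(x <- r) mulA A (f x) v.
Proof. exact: (big_morph (mulA A ^~ v) (fun u u' => mulA_addl u u' v) (mulA0l v)). Qed.

Lemma mulA_sumr (I : Type) (r : seq I) (f : I -> 'rV[F]_n) u :
  mulA A u (\sum_(x <- r) f x) = \sum_(x <- r) mulA A u (f x).
Proof. exact: (big_morph (mulA A u) (mulA_addr u) (mulA0r u)). Qed.

Lemma mulA_coord u v k :
  mulA A u v 0 k = \sum_i \sum_j u 0 i * v 0 j * sc A i j 0 k.
Proof.
rewrite /mulA summxE; apply: eq_bigr => i _; rewrite summxE.
by apply: eq_bigr => j _; rewrite mxE.
Qed.

Lemma mulA_coord_support u v k : mulA A u v 0 k != 0 ->
  exists i j, [/\ u 0 i != 0, v 0 j != 0 & sc A i j 0 k != 0].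
Proof.
case: (pickP [pred ij : 'I_n * 'I_n | u 0 ij.1 * v 0 ij.2 * sc A ij.1 ij.2 0 k != 0]).
  by move=> [i j]; rewrite /= !mulf_eq0 !negb_or => /andP[/andP[? ?] ?] _; exists i, j.
move=> none; rewrite mulA_coord big1 ?eqxx // => i _.
by rewrite big1 // => j _; apply/eqP/negbFE/(none (i, j)).
Qed.

Lemma mulA_coord_eq0 u v k :
  (forall i j, u 0 i != 0 -> v 0 j != 0 -> sc A i j 0 k = 0) -> mulA A u v 0 k = 0.
Proof.
move=> sc0; apply/eqP; apply: contraT => /mulA_coord_support[i [j [ui vj]]].
by rewrite sc0 ?eqxx.
Qed.

Lemma mulA_coord_single u v (i0 j0 k : 'I_n) :
    (forall i j, u 0 i != 0 -> v 0 j != 0 -> (i != i0) || (j != j0) ->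
       sc A i j 0 k = 0) ->
  mulA A u v 0 k = u 0 i0 * v 0 j0 * sc A i0 j0 0 k.
Proof.
move=> sc0; have term0 i j : (i != i0) || (j != j0) -> u 0 i * v 0 j * sc A i j 0 k = 0.
  have [-> | ui] := eqVneq (u 0 i) 0; first by rewrite !mul0r.
  have [-> | vj] := eqVneq (v 0 j) 0; first by rewrite mulr0 mul0r.
  by move=> ij; rewrite sc0 ?mulr0.
rewrite mulA_coord (bigD1 i0) //= (bigD1 j0) //= !big1 ?addr0 // => [i ni0|j nj0].
  by rewrite big1 // => j _; apply: term0; rewrite ni0.
by apply: term0; rewrite nj0 orbT.
Qed.

Lemma unital_of_sc (i0 : 'I_n) : one A = ev F n i0 ->
  (forall j : 'I_n, sc A i0 j = ev F n j /\ sc A j i0 = ev F n j) -> is_unital A.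
Proof.
move=> one_i0 sc_i0 x; rewrite one_i0 ev_delta; split; apply/rowP => k.
  rewrite mulA_coord (bigD1 i0) //= [X in _ + X]big1 => [|i ni0]; last first.
    by rewrite big1 // => j _; rewrite mxE (negbTE ni0) andbF !mul0r.
  rewrite addr0 [in RHS](row_sum_delta x) summxE; apply: eq_bigr => j _.
  by rewrite mxE !eqxx mul1r (sc_i0 j).1 ev_delta !mxE.
rewrite mulA_coord [in RHS](row_sum_delta x) summxE; apply: eq_bigr => i _.
rewrite (bigD1 i0) //= [X in _ + X]big1 => [|j nj0]; last first.
  by rewrite mxE (negbTE nj0) andbF mulr0 mul0r.
by rewrite addr0 mxE !eqxx mulr1 (sc_i0 i).2 ev_delta !mxE.
Qed.

End Multiplication.

Section Spans.
Variables (F : fieldType) (n : nat) (A : nalg F n) (S : seq 'rV[F]_n).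
Implicit Types (u v : 'rV[F]_n) (w : word 'rV[F]_n).
Local Notation L := (inL A S).

Lemma inL_one i c : L i (c *: one A).
Proof. by exists c, [::]; split => //; rewrite big_nil addr0. Qed.

Lemma inL0 i : L i 0.
Proof. by rewrite -(scale0r (one A)); apply: inL_one. Qed.

Lemma inL_add i u v : L i u -> L i v -> L i (u + v).
Proof.
case=> [c [ps [ps_ok ->]]] [d [qs [qs_ok ->]]]; exists (c + d), (ps ++ qs).
by rewrite all_cat ps_ok qs_ok big_cat scalerDl addrACA.
Qed.

Lemma inL_scale i a u : L i u -> L i (a *: u).
Proof.
case=> [c [ps [ps_ok ->]]]; exists (a * c), [seq (a * q.1, q.2) | q <- ps].
rewrite all_map big_map scalerDr scaler_sumr scalerA; split => //.
by congr (_ + _); apply: eq_bigr => q _; rewrite scalerA.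
Qed.

Lemma inL_sum (I : Type) (P : pred I) i (r : seq I) (f : I -> 'rV[F]_n) :
  all P r -> (forall x, P x -> L i (f x)) -> L i (\sum_(x <- r) f x).
Proof.
move=> + Lf; elim: r => [_ | x r IHr /andP[Px Pr]].
  by rewrite big_nil; apply: inL0.
by rewrite big_cons; apply: inL_add; [apply: Lf | apply: IHr].
Qed.

Lemma inL_mono i j u : (i <= j)%N -> L i u -> L j u.
Proof.
move=> le_ij [c [ps [ps_ok ->]]]; exists c, ps; split => //.
by apply: sub_all ps_ok => q /andP[-> /leq_trans->].
Qed.

Lemma word_in_node w1 w2 : word_in S (Node w1 w2) = word_in S w1 && word_in S w2.
Proof. by rewrite /word_in /= all_cat. Qed.

Lemma wlen_node w1 w2 : wlen (Node w1 w2) = (wlen w1 + wlen w2)%N.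
Proof. by rewrite /wlen /= size_cat. Qed.

Lemma inL_word w : word_in S w -> L (wlen w) (weval A w).
Proof.
move=> Sw; exists 0, [:: (1, w)].
by rewrite /= Sw leqnn big_seq1 scale0r add0r scale1r.
Qed.

Lemma inL_coord_eq0 i v k : L i v -> one A 0 k = 0 ->
  (forall w, word_in S w -> (wlen w <= i)%N -> weval A w 0 k = 0) -> v 0 k = 0.
Proof.
case=> [c [ps [ps_ok ->]]] one_k words_k; rewrite !mxE one_k mulr0 add0r summxE.
elim: ps ps_ok => [_ | q ps IHps /andP[/andP[Sq le_qi] ps_ok]].
  by rewrite big_nil.
by rewrite big_cons mxE words_k // mulr0 add0r IHps.
Qed.

Section Unital.
Hypothesis A_unital : is_unital A.

Lemma inL_mul_word w j v : word_in S w -> L j v ->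
  L (wlen w + j)%N (mulA A (weval A w) v).
Proof.
move=> Sw [c [qs [qs_ok ->]]].
rewrite mulA_addr mulA_scaler (A_unital _).2 mulA_sumr.
apply: inL_add; first by apply/inL_scale/(inL_mono (leq_addr _ _))/inL_word.
apply: (inL_sum qs_ok) => q /andP[Sq le_qj]; rewrite mulA_scaler.
apply/inL_scale/(@inL_mono (wlen (Node w q.2))); first by rewrite wlen_node leq_add2l.
by apply: inL_word; rewrite word_in_node Sw.
Qed.

Lemma inL_mul i j u v : L i u -> L j v -> L (i + j)%N (mulA A u v).
Proof.
move=> [c [ps [ps_ok ->]]] Lv.
rewrite mulA_addl mulA_scalel (A_unital _).1 mulA_suml.
apply: inL_add; first by apply/inL_scale/(inL_mono (leq_addl _ _)).
apply: (inL_sum ps_ok) => q /andP[Sq le_qi]; rewrite mulA_scalel.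
by apply/inL_scale/(inL_mono _ (inL_mul_word Sq Lv)); rewrite leq_add2r.
Qed.

End Unital.

Lemma inL_triangular k a :
    (forall m, (a <= m < n)%N -> exists y, lead m y /\ L k y) ->
  forall v, vanish_below a v -> L k v.
Proof.
move=> leads; suff: forall d v, (d <= n - a)%N -> vanish_below (n - d) v -> L k v.
  by move=> IH v va; apply: (IH (n - a)%N) => // i lt_i; apply: va; lia.
elim=> [v _ v0 | d IHd v le_d vd].
  have -> : v = 0 by apply/rowP => i; rewrite mxE v0 ?subn0.
  exact: inL0.
have m_lt : (n - d.+1 < n)%N by lia.
have [y [[y_low y_m] Ly]] := leads (n - d.+1)%N ltac:(lia).
set m := Ordinal m_lt; set c := v 0 m / y 0 m.
rewrite -(subrK (c *: y) v); apply: inL_add; last exact: inL_scale.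
apply: IHd; first lia.
move=> i lt_i; rewrite !mxE; have [lt_im | le_mi] := ltnP i m.
  by rewrite y_low // vd // mulr0 subr0.
have -> : i = m by apply: val_inj; move: le_mi => /=; lia.
by rewrite divfK ?subrr ?y_m.
Qed.

End Spans.

Section Construction.
Variables (F : fieldType) (n p : nat).
Hypotheses (n_gt4 : (4 < n)%N) (p_le : (p <= n - 3)%N).
Implicit Types (u v : 'rV[F]_n) (S : seq 'rV[F]_n).

(* [table i j k]: e_k occurs in e_i e_j; [aug_table] is the case i, j > 0. *)
Definition aug_table (i j k : nat) : bool :=
  [&& i == j, i <= n - 3 & k == i.+1]%N || [&& i == n - 2, j == p.+1 & k == n - 1]%N.

Definition table (i j k : nat) : bool :=
  if i == 0%N then k == j else if j == 0%N then k == i else aug_table i j k.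

Definition chain_alg : nalg F n :=
  NAlg (fun i j : 'I_n => \row_k (table i j k)%:R) (ev F n 0).

Definition deg (k : nat) : nat :=
  (if k <= n - 2 then 2 ^ (k - 1) else 2 ^ (n - 3) + 2 ^ p)%N.

Let o0 : 'I_n := Ordinal (ltn_trans (isT : 0 < 4)%N n_gt4).
Let o1 : 'I_n := Ordinal (ltn_trans (isT : 1 < 4)%N n_gt4).

Lemma sc_chain_alg i j k : sc chain_alg i j 0 k = (table i j k)%:R.
Proof. by rewrite mxE. Qed.

Lemma table_pos i j k : (0 < i)%N -> (0 < j)%N -> table i j k = aug_table i j k.
Proof. by rewrite /table; case: i => // i; case: j. Qed.

Lemma chain_alg_unital : is_unital chain_alg.
Proof.
apply: (@unital_of_sc _ _ _ o0) => // j; split; apply/rowP => k; rewrite !mxE //.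
by rewrite /table /=; case: eqP => [-> |].
Qed.

Lemma deg_aug_table i j k : (0 < i)%N -> aug_table i j k -> deg k = (deg i + deg j)%N.
Proof.
move=> i_gt0 /orP[/and3P[/eqP <- le_i /eqP ->] | /and3P[/eqP -> /eqP -> /eqP ->]].
  rewrite /deg !ifT; try lia.
  by case: i i_gt0 {le_i} => // i _; rewrite !subn1 /= expnS mul2n -addnn.
rewrite /deg ifF ?ifT; try lia.
by rewrite -subnDA subSS subn0.
Qed.

Lemma lead_mul a b c u v : (0 < a)%N -> (0 < b)%N -> aug_table a b c ->
    (forall i j k, (a <= i)%N -> (b <= j)%N -> (k <= c)%N -> aug_table i j k ->
       [&& i == a, j == b & k == c]) ->
  lead a u -> lead b v -> lead c (mulA chain_alg u v).
Proof.
move=> a_gt0 b_gt0 abc abc_min [u_low u_a] [v_low v_b].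
have support i j : u 0 i != 0 -> v 0 j != 0 -> (a <= i)%N /\ (b <= j)%N.
  by move=> ui vj; split; [move: ui | move: vj]; apply: vanish_below_support.
have [a_lt b_lt] : (a < n)%N /\ (b < n)%N by move: abc; rewrite /aug_table; lia.
split=> [k lt_kc | k kc].
  apply: mulA_coord_eq0 => i j ui vj; have [ai bj] := support _ _ ui vj.
  have /negbTE not_aug : ~~ aug_table i j k.
    by apply/negP => /(abc_min _ _ _ ai bj (ltnW lt_kc)); lia.
  by rewrite sc_chain_alg table_pos ?not_aug //; lia.
rewrite (@mulA_coord_single _ _ _ _ _ (Ordinal a_lt) (Ordinal b_lt)).
  by rewrite sc_chain_alg table_pos //= kc abc mulr1 mulf_neq0 ?u_a ?v_b.
move=> i j ui vj; have [ai bj] := support _ _ ui vj; rewrite -!val_eqE /= => not_ab.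
have /negbTE not_aug : ~~ aug_table i j k.
  by apply/negP => /(abc_min _ _ _ ai bj); rewrite kc leqnn; lia.
by rewrite sc_chain_alg table_pos ?not_aug //; lia.
Qed.

Lemma lead_inL_mul S a b c u v : (0 < a)%N -> (0 < b)%N -> aug_table a b c ->
    (forall i j k, (a <= i)%N -> (b <= j)%N -> (k <= c)%N -> aug_table i j k ->
       [&& i == a, j == b & k == c]) ->
    lead a u /\ inL chain_alg S (deg a) u -> lead b v /\ inL chain_alg S (deg b) v ->
  lead c (mulA chain_alg u v) /\ inL chain_alg S (deg c) (mulA chain_alg u v).
Proof.
move=> a_gt0 b_gt0 abc abc_min [ua Lu] [vb Lv]; split; first exact: lead_mul ua vb.
by rewrite (deg_aug_table a_gt0 abc); exact: (inL_mul chain_alg_unital Lu Lv).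
Qed.

Lemma deg1 : deg 1 = 1%N.
Proof. by rewrite /deg ifT //; lia. Qed.

Lemma deg_last : deg (n - 1) = (2 ^ (n - 3) + 2 ^ p)%N.
Proof. by rewrite /deg ifF //; lia. Qed.

Lemma deg_le_last m : (m <= n - 1)%N -> (deg m <= deg (n - 1))%N.
Proof.
rewrite deg_last /deg; case: ifP => // le_m _.
by apply: leq_trans (leq_addr _ _); apply: leq_pexp2l => //; lia.
Qed.

Lemma mul_coord1_eq0 u v : u 0 o1 = 0 -> v 0 o1 = 0 -> mulA chain_alg u v 0 o1 = 0.
Proof.
move=> u1 v1; apply: mulA_coord_eq0 => i j ui vj.
have i_neq1 : (i : nat) != 1%N.
  by apply: contra ui => /eqP i1; rewrite (_ : i = o1) ?u1 //; apply: val_inj.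
have j_neq1 : (j : nat) != 1%N.
  by apply: contra vj => /eqP j1; rewrite (_ : j = o1) ?v1 //; apply: val_inj.
have /negbTE not_table : ~~ table i j o1.
  by rewrite /table /aug_table /=; case: ifP => i0; [lia | case: ifP => j0; lia].
by rewrite sc_chain_alg not_table.
Qed.

Lemma generates_coord1 S :
  generates chain_alg S -> has (fun s : 'rV[F]_n => s 0 o1 != 0) S.
Proof.
move=> S_gen; apply/negPn/negP => /hasPn no_s.
have words_o1 w : word_in S w -> weval chain_alg w 0 o1 = 0.
  elim: w => [s | w1 IH1 w2 IH2]; first by rewrite /word_in /= andbT => /no_s/negPn/eqP.
  rewrite word_in_node => /andP[S1 S2].
  by apply: mul_coord1_eq0; [apply: IH1 | apply: IH2].
have [i Li] := S_gen (ev F n 1).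
have := inL_coord_eq0 Li _ (fun w Sw _ => words_o1 w Sw).
by rewrite !mxE /= => /(_ erefl)/eqP; rewrite oner_eq0.
Qed.

Lemma exists_lead_inL S s : s \in S -> s 0 o1 != 0 ->
  forall m, (0 < m <= n - 1)%N -> exists y, lead m y /\ inL chain_alg S (deg m) y.
Proof.
move=> sS s1.
have lead1 : exists y, lead 1 y /\ inL chain_alg S (deg 1) y.
  exists (s - s 0 o0 *: one chain_alg); split; first split.
  - move=> i lt_i1; have -> : i = o0 by apply: val_inj => /=; lia.
    by rewrite !mxE /= mulr1 subrr.
  - move=> i i1; have -> : i = o1 by apply: val_inj.
    by rewrite !mxE /= mulr0 subr0.
  rewrite deg1 -scaleNr; apply: inL_add; last exact: inL_one.
  by apply: (@inL_word _ _ _ _ (Leaf s)); rewrite /word_in /= sS.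
have squares m : (0 < m <= n - 2)%N -> exists y, lead m y /\ inL chain_alg S (deg m) y.
  elim: m => // -[_ _ | m IHm lt_m]; first exact: lead1.
  have [y yL] := IHm ltac:(lia).
  exists (mulA chain_alg y y).
  by apply: (lead_inL_mul _ _ _ _ yL yL); rewrite /aug_table; lia.
move=> m lt_m; have [le_m | lt_m'] := leqP m (n - 2); first by apply: squares; lia.
have -> : m = (n - 1)%N by lia.
have [[u uL] [v vL]] := (squares (n - 2)%N ltac:(lia), squares p.+1 ltac:(lia)).
exists (mulA chain_alg u v).
by apply: (lead_inL_mul _ _ _ _ uL vL); rewrite /aug_table; lia.
Qed.

Lemma inL_full S : has (fun s : 'rV[F]_n => s 0 o1 != 0) S ->
  forall v, inL chain_alg S (deg (n - 1)) v.
Proof.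
case/hasP=> s sS s1 v; rewrite -(subrK (v 0 o0 *: one chain_alg) v).
apply: inL_add; last exact: inL_one.
apply: (inL_triangular (a := 1)).
  move=> m lt_m; have [y [ym Ly]] := exists_lead_inL sS s1 (m := m) ltac:(lia).
  by exists y; split => //; apply: inL_mono (deg_le_last _) Ly; lia.
move=> i lt_i1; have -> : i = o0 by apply: val_inj => /=; lia.
by rewrite !mxE /= mulr1 subrr.
Qed.

Lemma word_ev1_coord_deg w : word_in [:: ev F n 1] w ->
  forall k : 'I_n, weval chain_alg w 0 k != 0 -> (0 < k)%N /\ wlen w = deg k.
Proof.
elim: w => [x | w1 IH1 w2 IH2].
  rewrite /word_in /= andbT inE => /eqP -> k; rewrite mxE.
  by have [-> | _] := eqVneq (k : nat) 1%N; rewrite ?deg1 ?eqxx.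
rewrite word_in_node => /andP[S1 S2] k /mulA_coord_support[i [j [w1i w2j]]].
have [[i_gt0 deg_i] [j_gt0 deg_j]] := (IH1 S1 i w1i, IH2 S2 j w2j).
rewrite sc_chain_alg table_pos //.
case: (boolP (aug_table i j k)) => [aug _ | _]; last by rewrite eqxx.
split; first by move: aug; rewrite /aug_table; lia.
by rewrite wlen_node deg_i deg_j (deg_aug_table i_gt0 aug).
Qed.

Lemma ev1_length_ge j :
  (forall v, inL chain_alg [:: ev F n 1] j v) -> (deg (n - 1) <= j)%N.
Proof.
move=> full; rewrite leqNgt; apply/negP => lt_j.
have last_lt : (n - 1 < n)%N by lia.
set top := Ordinal last_lt.
have one_top : one chain_alg 0 top = 0.
  by rewrite mxE /=; have /negbTE-> : (n - 1 != 0)%N by lia.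
have words_top w :
    word_in [:: ev F n 1] w -> (wlen w <= j)%N -> weval chain_alg w 0 top = 0.
  move=> Sw le_wj; apply/eqP; apply: contraT => /(word_ev1_coord_deg Sw)[_ deg_w].
  by move: le_wj; rewrite deg_w /top /=; lia.
have := inL_coord_eq0 (full (ev F n (n - 1))) one_top words_top.
by rewrite mxE eqxx => /eqP; rewrite oner_eq0.
Qed.

End Construction.

Theorem theorem4p1 (F : fieldType) (n : nat) : (4 < n)%N ->
  forall p : nat, (p <= n - 3)%N ->
  exists A : nalg F n, is_unital A /\ alg_length A (2 ^ (n - 3) + 2 ^ p).
Proof.
move=> n_gt4 p p_le; exists (chain_alg F n p); split; first exact: chain_alg_unital.
rewrite -(deg_last n_gt4 p_le).
have ev1_full : forall v, inL (chain_alg F n p) [:: ev F n 1] (deg n p (n - 1)) v.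
  by apply: inL_full => //=; rewrite mxE oner_eq0.
split.
  exists [:: ev F n 1]; split; first by move=> v; exists (deg n p (n - 1)).
  by split; [exact: ev1_full | exact: ev1_length_ge].
move=> S k S_gen [_ k_min]; apply: k_min.
exact: inL_full (generates_coord1 n_gt4 p_le S_gen).
Qed.
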